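(* Assume $E\setminus T\neq\emptyset$. In the SimpleSolver process, every $f_i$ is feasible and for every $i\ge 0$, \[ \mathbb{E}\big[\xi_r(f_i)\big]-\xi_r(f^* )\le\Big(1-\frac{1}{\tau}\Big)^{i}\big(\xi_r(f_0)-\xi_r(f^* )\big). \]
   Context: Let $G=(V,E,w)$ be a connected undirected graph with edge weights $w_e>0$ and resistances $r_e=1/w_e$. Each edge has a fixed orientation $(a,b)$; for $f\in\mathbb{R}^E$ write $f(b,a):=-f(a,b)$. The incidence matrix $B\in\mathbb{R}^{E\times V}$ has $B_{(a,b),c}=1$ if $c=a$, $-1$ if $c=b$, $0$ otherwise; $R=\mathrm{diag}(r_e)_{e\in E}$. The energy of $f\in\mathbb{R}^E$ is $\xi_r(f)=f^TRf$. Fix $\chi\in\mathbb{R}^V$ with $\sum_a\chi(a)=0$; $f$ is feasible if $B^Tf=\chi$; $f^*$ is the unique feasible $f$ minimizing $\xi_r(f)$. Let $T\subseteq E$ be a spanning tree. For vertices $a,b$, $\pi_{(a,b)}\in\mathbb{R}^E$ is the unit flow from $a$ to $b$ along the unique $a$–$b$ path in $T$. For $e=(a,b)\in E\setminus T$, the tree cycle vector is $c_e=\mathbf{1}_e-\pi_{(a,b)}$, $R_e=c_e^TRc_e$, and $\Delta_e(f)=f^TRc_e$. The tree condition number is $\tau=\sum_{e\in E\setminus T}R_e/r_e$. Let $p$ be the probability distribution on $E\setminus T$ with $p_e=\frac{R_e}{r_e\tau}$. The SimpleSolver process: $f_0$ is the unique feasible flow supported on $T$; for $i\ge1$, $e_i$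 is drawn from $p$ independently of everything else and $f_i=f_{i-1}-\frac{\Delta_{e_i}(f_{i-1})}{R_{e_i}}c_{e_i}$. *)

From HB Require Import structures.
From mathcomp Require Import all_boot all_order all_algebra.
From Stdlib Require Import ClassicalEpsilon.
Set Implicit Arguments. Unset Strict Implicit. Unset Printing Implicit Defensive.
Import Order.TTheory GRing.Theory Num.Theory.
Local Open Scope ring_scope.

Section Electrical.
Variables (R : realFieldType) (V E : finType) (src dst : E -> V).

Definition step_start (s : E * bool) : V := if s.2 then src s.1 else dst s.1.
Definition step_end (s : E * bool) : V := if s.2 then dst s.1 else src s.1.

Fixpoint is_walk (S : {set E}) (x b : V) (p : seq (E * bool)) : bool :=
  match p with
  | [::] => x == b
  | s :: p' => [&& s.1 \in S, step_start s == x & is_walk S (step_end s) b p']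
  end.

Definition is_simple_path (S : {set E}) (a b : V) (p : seq (E * bool)) : bool :=
  is_walk S a b p && uniq (a :: map step_end p).

Definition is_cycle (S : {set E}) (x : V) (p : seq (E * bool)) : bool :=
  [&& (0 < size p)%N, is_walk S x x p, uniq (map fst p) & uniq (map step_end p)].

Definition connected_in (S : {set E}) : Prop :=
  forall a b : V, exists p, is_walk S a b p.

Definition acyclic (S : {set E}) : Prop :=
  forall x p, ~~ is_cycle S x p.

Definition spanning_tree (T : {set E}) : Prop := connected_in T /\ acyclic T.

Definition walk_flow (p : seq (E * bool)) (e : E) : R :=
  \sum_(s <- p | s.1 == e) (if s.2 then 1 else -1).

Definition tree_path_flow (T : {set E}) (a b : V) : E -> R :=
  walk_flow (epsilon (inhabits [::]) (fun p => is_simple_path T a b p)).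

Definition indicator (e : E) : E -> R := fun e' => if e' == e then 1 else 0.

Definition incidence (e : E) (c : V) : R :=
  if c == src e then 1 else if c == dst e then -1 else 0.

Definition divergence (f : E -> R) (c : V) : R := \sum_e incidence e c * f e.

Definition feasible (chi : V -> R) (f : E -> R) : Prop :=
  forall c, divergence f c = chi c.

Variable (r : E -> R).

Definition energy (f : E -> R) : R := \sum_e r e * f e ^+ 2.

Variable (T : {set E}).

Definition cycle_vec (e : E) : E -> R :=
  fun e' => indicator e e' - tree_path_flow T (src e) (dst e) e'.

Definition cycle_res (e : E) : R := \sum_e' r e' * cycle_vec e e' ^+ 2.

Definition Delta (e : E) (f : E -> R) : R := \sum_e' f e' * r e' * cycle_vec e e'.

Definition tau : R := \sum_(e | e \notin T) cycle_res e / r e.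

Definition prob (e : E) : R := if e \in T then 0 else cycle_res e / (r e * tau).

Definition solver_step (f : E -> R) (e : E) : E -> R :=
  fun e' => f e' - Delta e f / cycle_res e * cycle_vec e e'.

Definition solver_iter (f0 : E -> R) (s : seq E) : E -> R := foldl solver_step f0 s.

(* E[xi_r(f_i)] : expectation over the i independent draws from p *)
Definition expected_energy (f0 : E -> R) (i : nat) : R :=
  \sum_(t : i.-tuple E) (\prod_(e <- t) prob e) * energy (solver_iter f0 t).

End Electrical.

From HB Require Import structures.
From Stdlib Require Import ClassicalEpsilon.
From mathcomp Require Import all_boot all_order all_algebra zify ring lra.
Import Order.TTheory GRing.Theory Num.Theory.
Set Implicit Arguments. Unset Strict Implicit. Unset Printing Implicit Defensive.

(* Feasibility is preserved because every tree cycle vector c_e is a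
   circulation.  For the energy bound, a random step along e lowers the energy
   by exactly Delta_e(f)^2 / R_e, so with p_e = R_e / (r_e tau) the expected
   decrease is tau^-1 sum_(e not in T) Delta_e(f)^2 / r_e.  The key inequality
   bounds the energy gap xi(f) - xi(fstar) by that same sum: g = f - fstar is a
   circulation, hence g = sum_(e not in T) g_e c_e (a circulation vanishing off
   the acyclic tree is zero), and fstar is r-orthogonal to all circulations; a
   weighted AM-GM step concludes.  So each step contracts the expected gap by
   1 - 1/tau, and induction over the number of steps gives the theorem. *)

Section Walks.
Variables (V E : finType) (src dst : E -> V).
Local Notation sst := (step_start src dst).
Local Notation sen := (step_end src dst).
Local Notation walk := (is_walk src dst).
Local Notation verts x p := (x :: map sen p).

Lemma walk_cat S x b p1 p2 : walk S x b (p1 ++ p2) =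
  walk S x (last x (map sen p1)) p1 && walk S (last x (map sen p1)) b p2.
Proof. by elim: p1 x => [|s p IH] x /=; rewrite ?eqxx // IH !andbA. Qed.

Lemma walk_last S x b p : walk S x b p -> last x (map sen p) = b.
Proof. by elim: p x => [|s p IH] x /= => [/eqP | /and3P[_ _ /IH]]. Qed.

Lemma walk_concat S x y b p1 p2 :
  walk S x y p1 -> walk S y b p2 -> walk S x b (p1 ++ p2).
Proof. by move=> H1 H2; rewrite walk_cat (walk_last H1) H1. Qed.

Lemma walk_subset (S S' : {set E}) x b p :
  S \subset S' -> walk S x b p -> walk S' x b p.
Proof.
move=> sub; elim: p x => [|s p IH] x //= /and3P[Hs -> Hw].
by rewrite (subsetP sub _ Hs) (IH _ Hw).
Qed.

Lemma nth_verts y x p i : (i <= size p)%N ->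
  nth y (verts x p) i = last x (map sen (take i p)).
Proof. by elim: p x i => [|s p IH] x [|i] //= Hi; rewrite IH. Qed.

Lemma walk_nth S x b p s0 i : (i < size p)%N -> walk S x b p ->
  [/\ (nth s0 p i).1 \in S, sst (nth s0 p i) = nth x (verts x p) i
    & sen (nth s0 p i) = nth x (verts x p) i.+1].
Proof.
elim: p x i => [|s p IH] x [|i] //= Hi /and3P[H1 /eqP H2 H3].
  by split=> //; case: p {IH H3 Hi}.
have [A B C] := IH _ _ Hi H3; split=> //.
  by rewrite B; apply: set_nth_default; rewrite /= size_map ltnW.
by rewrite C /=; apply: set_nth_default; rewrite size_map.
Qed.

Lemma step_same_edge (s1 s2 : E * bool) : s1.1 = s2.1 ->
  (sst s1 = sst s2 /\ sen s1 = sen s2) \/ (sst s1 = sen s2 /\ sen s1 = sst s2).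
Proof.
case: s1 s2 => [e1 [|]] [e2 [|]] /= ->; rewrite /step_start /step_end /=; by auto.
Qed.

Lemma exists_simple_path S a b : (exists p, walk S a b p) ->
  exists p, is_simple_path src dst S a b p.
Proof.
case=> p; move: {2}(size p) (leqnn (size p)) => n; elim: n p => [|n IH] p.
  by rewrite leqn0 => /eqP/size0nil -> Hw; exists [::]; rewrite /is_simple_path Hw.
move=> Hs Hw; have [Hu | /(uniqPn a)[i [j [ij jlt eqij]]]] := boolP (uniq (verts a p)).
  by exists p; rewrite /is_simple_path Hw Hu.
rewrite /= size_map ltnS in jlt.
have ilt : (i <= size p)%N by apply: ltnW; apply: leq_trans ij jlt.
rewrite !nth_verts // in eqij.
apply: (IH (take i p ++ drop j p)).
  by rewrite size_cat size_take size_drop; case: ltnP => Hi; lia.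
rewrite walk_cat.
move: (Hw); rewrite -{1}(cat_take_drop i p) walk_cat => /andP[-> _] /=.
by move: Hw; rewrite -{1}(cat_take_drop j p) walk_cat eqij => /andP[_].
Qed.

Section SimplePaths.
Variables (S : {set E}) (x b : V) (p : seq (E * bool)).
Hypotheses (Hw : walk S x b p) (Hu : uniq (verts x p)).

Let size_verts : size (verts x p) = (size p).+1.
Proof. by rewrite /= size_map. Qed.

Lemma walk_verts_end : nth x (verts x p) (size p) = b.
Proof. by rewrite nth_verts // take_size (walk_last Hw). Qed.

Lemma simple_path_verts_inj k l : (k <= size p)%N -> (l <= size p)%N ->
  nth x (verts x p) k = nth x (verts x p) l -> k = l.
Proof. by move=> Hk Hl /eqP; rewrite nth_uniq ?size_verts ?ltnS // => /eqP. Qed.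

Lemma simple_path_edge_at_end s j : (j < size p)%N ->
  (nth s p j).1 = s.1 -> sst s = b -> j = (size p).-1.
Proof.
move=> Hj Hedge Hs; have [_ Hst Hen] := walk_nth s Hj Hw.
case: (step_same_edge Hedge) => [[Hss _]|[_ Hse]].
  have := simple_path_verts_inj (ltnW Hj) (leqnn _).
  by rewrite -Hst Hss Hs walk_verts_end => /(_ erefl) eq_j; rewrite eq_j ltnn in Hj.
have := simple_path_verts_inj Hj (leqnn _).
by rewrite -Hen Hse Hs walk_verts_end => /(_ erefl) <-.
Qed.

Lemma simple_path_edges_uniq : uniq (map fst p).
Proof.
case Hp: p => [//|s0 p0]; rewrite -Hp; apply/(uniqPn s0.1) => -[i [j [ij]]].
rewrite size_map => jlt; have ilt := ltn_trans ij jlt; rewrite !(nth_map s0) // => Hedge.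
have [_ Hst Hen] := walk_nth s0 ilt Hw; have [_ Hst' Hen'] := walk_nth s0 jlt Hw.
case: (step_same_edge Hedge) => [[_ Hsame]|[Hopp _]].
  have := simple_path_verts_inj ilt jlt; rewrite -Hen -Hen' Hsame => /(_ erefl) [] eq_ij.
  by rewrite eq_ij ltnn in ij.
have := simple_path_verts_inj (ltnW ilt) jlt; rewrite -Hst -Hen' Hopp => /(_ erefl) eq_ij.
by rewrite eq_ij ltnNge leqnSn in ij.
Qed.

Lemma simple_path_suffix k : (k <= size p)%N ->
  walk S (nth x (verts x p) k) b (drop k p) /\
  uniq (verts (nth x (verts x p) k) (drop k p)).
Proof.
move=> Hk; split.
  move: Hw; rewrite -{1}(cat_take_drop k p) walk_cat -(nth_verts x) //.
  by case/andP.
have : uniq (drop k (verts x p)) by rewrite drop_uniq.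
by rewrite (drop_nth x) ?size_verts ?ltnS //= map_drop.
Qed.

End SimplePaths.

Lemma cycle_of_simple_path S u b q s : walk S u b q -> uniq (verts u q) ->
  s.1 \in S -> sst s = b -> sen s = u -> s.1 \notin map fst q ->
  is_cycle src dst S u (q ++ [:: s]).
Proof.
move=> Hw Hu Hs Hst Hen Hfresh; rewrite /is_cycle size_cat addn1 /=.
rewrite !map_cat !cats1 !rcons_uniq Hfresh (simple_path_edges_uniq Hw Hu) Hen.
rewrite -[(_ \notin _) && _]/(uniq (verts u q)) Hu andbT.
by rewrite -cats1 (walk_concat Hw) //= Hs Hst Hen !eqxx.
Qed.

(* Otherwise simple paths in S could be extended forever (an extension that
   revisits a vertex would close a cycle), which the finiteness of V forbids. *)
Lemma acyclic_no_branching (S : {set E}) : (forall e, src e != dst e) ->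
  acyclic src dst S ->
  (forall s, s.1 \in S -> exists s', [/\ s'.1 \in S, s'.1 != s.1 & sst s' = sen s]) ->
  S = set0.
Proof.
move=> Hloop Hac Hbranch; apply/setP => e0; rewrite inE; apply/negP => He0.
suff long : forall n, exists x b p, [/\ walk S x b p, uniq (verts x p) & size p = n.+1].
  have [x [b [p [_ /card_uniqP Hcard Hsz]]]] := long #|V|.
  have := max_card (mem (verts x p)).
  by rewrite Hcard /= size_map Hsz => /ltnW; rewrite ltnn.
elim=> [|n [x [b [p [Hw Hu Hsz]]]]].
  exists (src e0), (dst e0), [:: (e0, true)].
  by rewrite /= /step_start /step_end /= He0 !eqxx inE Hloop.
have Hpos : (0 < size p)%N by rewrite Hsz.
have Hlast : ((size p).-1 < size p)%N by rewrite prednK.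
set s := nth (e0, true) p (size p).-1.
have [Hs _ Hsb] := walk_nth (e0, true) Hlast Hw.
rewrite prednK // (walk_verts_end Hw) in Hsb.
have [s' [Hs' Hnew Hst]] := Hbranch s Hs.
have Hws' : walk S b (sen s') [:: s'] by rewrite /= Hs' Hst Hsb !eqxx.
have [Hin | Hout] := boolP (sen s' \in verts x p); last first.
  exists x, (sen s'), (p ++ [:: s']); rewrite size_cat Hsz addn1.
  by rewrite (walk_concat Hw Hws') map_cat cats1 -rcons_cons rcons_uniq Hout Hu.
set k := index (sen s') (verts x p).
have Hk : (k <= size p)%N by rewrite -ltnS; move: Hin; rewrite -index_mem /= size_map.
have Hku : nth x (verts x p) k = sen s' by rewrite nth_index.
have [Hwk Huk] := simple_path_suffix Hw Hu Hk; rewrite Hku in Hwk Huk.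
exfalso; apply: (negP (Hac (sen s') (drop k p ++ [:: s']))).
rewrite Hsb in Hst; apply: (cycle_of_simple_path Hwk Huk Hs' Hst) => //.
rewrite map_drop; apply: contra Hnew => /mem_drop /(nthP s'.1) [j].
rewrite size_map => Hj; rewrite (nth_map s') // => Hedge.
have := simple_path_edge_at_end Hw Hu Hj Hedge Hst; rewrite /s => <-.
by rewrite -Hedge (set_nth_default s').
Qed.
End Walks.

Local Open Scope ring_scope.

Section Flows.
Variables (R : realFieldType) (V E : finType) (src dst : E -> V).
Hypothesis Hloop : forall e, src e != dst e.
Local Notation sst := (step_start src dst).
Local Notation sen := (step_end src dst).
Local Notation inc := (incidence R src dst).
Local Notation div := (divergence src dst).

Definition circulation (h : E -> R) : Prop := forall c, div h c = 0.

Lemma incidenceE e c : inc e c = (c == src e)%:R - (c == dst e)%:R.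
Proof.
rewrite /incidence; case: (c =P src e) => [->|_].
  by rewrite (negbTE (Hloop e)) /= subr0.
by case: (c =P dst e) => _; rewrite /= ?sub0r ?subr0 ?oppr0.
Qed.

Lemma divergence_lin (a b : R) (f g h : E -> R) c :
  (forall e, h e = a * f e + b * g e) -> div h c = a * div f c + b * div g c.
Proof.
move=> Hh; rewrite /divergence !mulr_sumr -big_split /=.
by apply: eq_bigr => e _; rewrite Hh; ring.
Qed.

Lemma divergence_sum (I : finType) (P : pred I) (a : I -> R) (f : I -> E -> R) c :
  div (fun e => \sum_(i | P i) a i * f i e) c = \sum_(i | P i) a i * div (f i) c.
Proof.
rewrite /divergence; under eq_bigr do rewrite mulr_sumr; rewrite exchange_big /=.
by apply: eq_bigr => i _; rewrite mulr_sumr; apply: eq_bigr => e _; ring.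
Qed.

Lemma divergence_indicator e c : div (indicator R e) c = inc e c.
Proof.
rewrite /divergence (bigD1 e) //= big1 => [|e' /negbTE Hne].
  by rewrite /indicator eqxx mulr1 addr0.
by rewrite /indicator Hne mulr0.
Qed.

Lemma walk_flow1 (s : E * bool) e :
  walk_flow R [:: s] e = if s.1 == e then (if s.2 then 1 else -1) else 0.
Proof. by rewrite /walk_flow big_cons big_nil; case: ifP; rewrite ?addr0. Qed.

Lemma walk_flow_cons (s : E * bool) p e :
  walk_flow R (s :: p) e = walk_flow R [:: s] e + walk_flow R p e.
Proof. by rewrite walk_flow1 /walk_flow big_cons; case: ifP; rewrite ?add0r. Qed.

Lemma divergence_step (s : E * bool) c :
  div (walk_flow R [:: s]) c = (c == sst s)%:R - (c == sen s)%:R.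
Proof.
rewrite /divergence (bigD1 s.1) //= big1 => [|e /negbTE Hne].
  rewrite walk_flow1 eqxx addr0 incidenceE.
  by case: s => e [] /=; rewrite /step_start /step_end /=; ring.
by rewrite walk_flow1 eq_sym Hne mulr0.
Qed.

Lemma divergence_walk_flow (S : {set E}) a b p c : is_walk src dst S a b p ->
  div (walk_flow R p) c = (c == a)%:R - (c == b)%:R.
Proof.
elim: p a => [|s p IH] a /=.
  move/eqP=> ->; rewrite subrr /divergence big1 // => e _.
  by rewrite /walk_flow big_nil mulr0.
case/and3P=> _ /eqP Hs Hw.
rewrite (@divergence_lin 1 1 (walk_flow R [:: s]) (walk_flow R p)) => [|e].
  by rewrite divergence_step (IH _ Hw) Hs; ring.
by rewrite walk_flow_cons !mul1r.
Qed.

Lemma walk_flow_out (S : {set E}) a b p e : is_walk src dst S a b p -> e \notin S ->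
  walk_flow R p e = 0.
Proof.
elim: p a => [|s p IH] a /=; first by rewrite /walk_flow big_nil.
case/and3P=> Hs _ Hw He; rewrite /walk_flow big_cons.
have -> : (s.1 == e) = false by apply: contraNF He => /eqP <-.
exact: IH Hw He.
Qed.

Lemma incidence_step_end (s : E * bool) : inc s.1 (sen s) != 0.
Proof.
rewrite incidenceE; case: s => e [] /=; rewrite /step_end /= eqxx.
  by rewrite [dst e == _]eq_sym (negbTE (Hloop e)) sub0r oppr_eq0 oner_eq0.
by rewrite (negbTE (Hloop e)) subr0 oner_eq0.
Qed.

Lemma incidence_step_start e v : inc e v != 0 -> sst (e, v == src e) = v.
Proof.
rewrite incidenceE /step_start /=; case: (v =P src e) => [-> //|_].
by case: (v =P dst e) => [-> //|_]; rewrite subrr eqxx.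
Qed.

Lemma circulation_continues (h : E -> R) : circulation h -> forall s, h s.1 != 0 ->
  exists s', [/\ h s'.1 != 0, s'.1 != s.1 & sst s' = sen s].
Proof.
move=> Hc s Hs; set v := sen s.
have [/existsP[e /andP[Hne]]|/existsPn Hnone] :=
  boolP [exists e, (e != s.1) && (inc e v * h e != 0)].
  rewrite mulf_eq0 negb_or => /andP[Hinc Hhe].
  by exists (e, v == src e); rewrite incidence_step_start.
have := Hc v; rewrite /divergence (bigD1 s.1) //= big1 => [|e Hne].
  rewrite addr0 => /eqP; rewrite mulf_eq0 (negbTE (incidence_step_end s)).
  by rewrite (negbTE Hs).
by move: (Hnone e); rewrite Hne negbK => /eqP.
Qed.

(* A circulation vanishing off an acyclic edge set vanishes everywhere: its
   support would be an acyclic set in which every edge can be continued. *)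
Lemma circulation_on_forest (T : {set E}) (h : E -> R) : acyclic src dst T ->
  circulation h -> (forall e, e \notin T -> h e = 0) -> forall e, h e = 0.
Proof.
move=> Hac Hc Hout e0; set S := [set e | h e != 0].
have HST : S \subset T by apply/subsetP => e; rewrite inE; apply: contraR => /Hout ->.
suff /setP/(_ e0) : S = set0 by rewrite !inE => /negbFE/eqP.
apply: acyclic_no_branching Hloop _ _ => [x p | s].
  apply: contra (Hac x p) => /and4P[Hsz Hw Hu1 Hu2].
  by rewrite /is_cycle Hsz (walk_subset HST Hw) Hu1 Hu2.
rewrite inE => /(circulation_continues Hc)[s' [Hs' Hnew Hst]].
by exists s'; rewrite inE.
Qed.
End Flows.

Section TreeCycles.
Variables (R : realFieldType) (V E : finType) (src dst : E -> V) (T : {set E}).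
Hypothesis Hloop : forall e, src e != dst e.
Hypothesis Hcon : connected_in src dst T.
Local Notation div := (divergence src dst).
Local Notation cyc := (cycle_vec R src dst T).

Lemma tree_path_walk a b :
  is_walk src dst T a b (epsilon (inhabits [::]) (fun p => is_simple_path src dst T a b p)).
Proof.
have := epsilon_spec (inhabits [::]) (fun p => is_true (is_simple_path src dst T a b p))
  (exists_simple_path (Hcon a b)).
by case/andP.
Qed.

(* Tree cycle vectors are circulations: the tree path returns the unit of
   flow sent along e. *)
Lemma cycle_vec_circulation e : circulation src dst (cyc e).
Proof.
move=> c; rewrite (@divergence_lin R V E src dst 1 (-1) (indicator R e)
  (tree_path_flow R src dst T (src e) (dst e))) => [|e']; last first.
  by rewrite /cycle_vec; ring.
rewrite divergence_indicator (divergence_walk_flow R Hloop _ (tree_path_walk _ _)).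
by rewrite (incidenceE R Hloop); ring.
Qed.

Lemma cycle_vec_off_tree e e' : e' \notin T -> cyc e e' = indicator R e e'.
Proof.
move=> He'; rewrite /cycle_vec /tree_path_flow.
by rewrite (walk_flow_out R (tree_path_walk _ _) He') subr0.
Qed.

Hypothesis Hac : acyclic src dst T.

(* The tree cycle vectors span the circulations: a circulation g equals
   sum_(e not in T) g_e c_e, since the difference is a circulation on the
   tree. *)
Lemma circulation_decomposition g : circulation src dst g ->
  forall e', g e' = \sum_(e | e \notin T) g e * cyc e e'.
Proof.
move=> Hg e'; apply/eqP; rewrite -subr_eq0; apply/eqP; move: e'.
apply: (circulation_on_forest Hloop Hac) => [c | e' He'].
  rewrite (@divergence_lin R V E src dst 1 (-1) g
    (fun e' => \sum_(e | e \notin T) g e * cyc e e')) => [|e']; last by ring.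
  rewrite divergence_sum Hg big1 => [|e _]; first by rewrite mulr0 mulr0 addr0.
  by rewrite cycle_vec_circulation mulr0.
rewrite (bigD1 e') //= big1 => [|e /andP[_ Hne]].
  by rewrite cycle_vec_off_tree // /indicator eqxx mulr1 addr0 subrr.
by rewrite cycle_vec_off_tree // /indicator eq_sym (negbTE Hne) mulr0.
Qed.
End TreeCycles.

(* If a quadratic t |-> 2 t a + t^2 b is nonnegative on the whole line, its
   linear coefficient vanishes; this is the first-order optimality condition. *)
Lemma quadratic_nonneg_linear_coeff (R : realFieldType) (a b : R) :
  (forall t, 0 <= 2 * t * a + t ^+ 2 * b) -> a = 0.
Proof.
move=> Hq; set d := `|b| + 1.
have Hb : b <= `|b| := ler_norm b.
have Hb0 : 0 <= `|b| := normr_ge0 b.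
have d_gt0 : 0 < d by rewrite /d; lra.
have Hneg : b - 2 * d < 0 by rewrite /d; lra.
have := Hq (- a / d).
have -> : 2 * (- a / d) * a + (- a / d) ^+ 2 * b = a ^+ 2 * (b - 2 * d) / d ^+ 2.
  by field; rewrite gt_eqF.
rewrite pmulr_lge0 ?invr_gt0 ?exprn_gt0 // nmulr_lge0 // => Ha.
by apply/eqP; rewrite -sqrf_eq0 eq_le Ha sqr_ge0.
Qed.

Lemma two_mul_le_weighted (R : realFieldType) (a d x : R) :
  0 < x -> 2 * (a * d) <= x * a ^+ 2 + d ^+ 2 / x.
Proof.
move=> Hx; have Hsq : 0 <= (x * a - d) ^+ 2 / x by rewrite divr_ge0 ?sqr_ge0 ?ltW.
have -> : x * a ^+ 2 + d ^+ 2 / x = 2 * (a * d) + (x * a - d) ^+ 2 / x.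
  by field; rewrite gt_eqF.
by rewrite lerDl.
Qed.

Section Energy.
Variables (R : realFieldType) (V E : finType) (src dst : E -> V) (T : {set E}).
Variable r : E -> R.
Hypothesis Hr : forall e, 0 < r e.
Local Notation cyc := (cycle_vec R src dst T).
Local Notation Dl := (Delta src dst r T).
Local Notation Res := (cycle_res src dst r T).

(* The inner product <f, g>_r = f^T R g; energy is its quadratic form and
   Delta_e(f) = <f, c_e>_r. *)
Definition inner (f g : E -> R) : R := \sum_e f e * r e * g e.

Lemma energy_lin (k : R) (f g h : E -> R) : (forall e, h e = f e + k * g e) ->
  energy r h = energy r f + 2 * k * inner f g + k ^+ 2 * energy r g.
Proof.
move=> Hh; rewrite /energy /inner mulr_sumr mulr_sumr -!big_split /=.
by apply: eq_bigr => e _; rewrite Hh; ring.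
Qed.

Lemma energy_solver_step f e : Res e != 0 ->
  energy r (solver_step src dst r T f e) = energy r f - Dl e f ^+ 2 / Res e.
Proof.
move=> HR; rewrite (@energy_lin (- (Dl e f / Res e)) f (cyc e)) => [|e']; last first.
  by rewrite /solver_step; ring.
rewrite -[inner f (cyc e)]/(Dl e f) -[energy r (cyc e)]/(Res e).
by field.
Qed.

Hypothesis Hcon : connected_in src dst T.

(* Off-tree edges satisfy r_e <= R_e, since c_e has coordinate 1 on e. *)
Lemma cycle_res_ge e : e \notin T -> r e <= Res e.
Proof.
move=> He; rewrite /cycle_res (bigD1 e) //= cycle_vec_off_tree // /indicator eqxx.
rewrite expr1n mulr1 lerDl.
by apply: sumr_ge0 => e' _; rewrite mulr_ge0 ?sqr_ge0 ?ltW.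
Qed.

Hypotheses (Hloop : forall e, src e != dst e) (Hac : acyclic src dst T).

Lemma energy_circulation g : circulation src dst g ->
  energy r g = \sum_(e | e \notin T) g e * inner g (cyc e).
Proof.
move=> Hg; rewrite /energy.
transitivity (\sum_e' g e' * r e' * \sum_(e | e \notin T) g e * cyc e e').
  by apply: eq_bigr => e' _; rewrite -(circulation_decomposition Hloop Hcon Hac Hg); ring.
under eq_bigr do rewrite mulr_sumr; rewrite exchange_big /=.
by apply: eq_bigr => e _; rewrite /inner mulr_sumr; apply: eq_bigr => e' _; ring.
Qed.

Variables (chi : V -> R) (fstar : E -> R).
Hypothesis Hfs : feasible src dst chi fstar.
Hypothesis Hmin : forall f, feasible src dst chi f -> energy r fstar <= energy r f.

Lemma minimizer_orthogonal h : circulation src dst h -> inner fstar h = 0.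
Proof.
move=> Hh; apply: (@quadratic_nonneg_linear_coeff _ _ (energy r h)) => t.
have Hfeas : feasible src dst chi (fun e => fstar e + t * h e).
  move=> c; rewrite (@divergence_lin R V E src dst 1 t fstar h) => [|e]; last by ring.
  by rewrite Hfs Hh mulr0 mul1r addr0.
have := Hmin Hfeas.
by rewrite (@energy_lin t fstar h (fun e => fstar e + t * h e)) // -addrA lerDl.
Qed.

Lemma Delta_minimizer e : Dl e fstar = 0.
Proof. exact/minimizer_orthogonal/cycle_vec_circulation. Qed.

(* Writing g = f - fstar, the gap equals
   energy g = sum g_e Delta_e(f), and 2 g_e Delta_e(f) <= r_e g_e^2 + Delta_e(f)^2 / r_e. *)
Lemma energy_gap_bound f : feasible src dst chi f ->
  energy r f - energy r fstar <= \sum_(e | e \notin T) Dl e f ^+ 2 / r e.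
Proof.
move=> Hf; set g := fun e => f e - fstar e.
have Hg : circulation src dst g.
  move=> c; rewrite (@divergence_lin R V E src dst 1 (-1) f fstar) => [|e]; last first.
    by rewrite /g; ring.
  by rewrite Hf Hfs; ring.
have -> : energy r f - energy r fstar = energy r g.
  rewrite (@energy_lin 1 fstar g f) => [|e]; last by rewrite /g; ring.
  by rewrite minimizer_orthogonal //; ring.
have HDelta e : Dl e f = inner g (cyc e).
  rewrite -[LHS]subr0 -(Delta_minimizer e) /Delta /inner -sumrB.
  by apply: eq_bigr => e' _; rewrite /g; ring.
have Htree : \sum_(e | e \notin T) r e * g e ^+ 2 <= energy r g.
  rewrite [leRHS](bigID (fun e => e \notin T)) /= lerDl.
  by apply: sumr_ge0 => e _; rewrite mulr_ge0 ?sqr_ge0 ?ltW.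
have : 2 * energy r g <= energy r g + \sum_(e | e \notin T) Dl e f ^+ 2 / r e.
  apply: le_trans (lerD Htree (lexx _)).
  rewrite {1}(energy_circulation Hg) mulr_sumr -big_split /=.
  by apply: ler_sum => e _; rewrite HDelta two_mul_le_weighted.
lra.
Qed.
End Energy.

Section SimpleSolver.
Variables (R : realFieldType) (V E : finType) (src dst : E -> V) (T : {set E}).
Variable r : E -> R.
Hypothesis Hr : forall e, 0 < r e.
Hypothesis Hcon : connected_in src dst T.
Hypothesis Hoff : exists e, e \notin T.
Local Notation Dl := (Delta src dst r T).
Local Notation Res := (cycle_res src dst r T).
Local Notation tau := (tau src dst r T).
Local Notation prob := (prob src dst r T).
Local Notation step := (solver_step src dst r T).
Local Notation EE := (expected_energy src dst r T).

Lemma cycle_res_gt0 e : e \notin T -> 0 < Res e.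
Proof. by move=> He; apply: lt_le_trans (Hr e) (cycle_res_ge Hr Hcon He). Qed.

(* Each off-tree edge contributes R_e / r_e >= 1 to tau, and there is one. *)
Lemma tau_ge1 : 1 <= tau.
Proof.
have [e0 He0] := Hoff; rewrite /tau (bigD1 e0) //=.
apply: le_trans (_ : Res e0 / r e0 <= _).
  by rewrite ler_pdivlMr // mul1r cycle_res_ge.
rewrite lerDl; apply: sumr_ge0 => e He.
by rewrite divr_ge0 ?ltW ?cycle_res_gt0 //; case/andP: He.
Qed.

Lemma tau_gt0 : 0 < tau.
Proof. exact: lt_le_trans ltr01 tau_ge1. Qed.

Lemma prob_ge0 e : 0 <= prob e.
Proof.
rewrite /prob; case: ifPn => // He.
by rewrite divr_ge0 ?ltW ?cycle_res_gt0 // mulr_gt0 ?tau_gt0.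
Qed.

Lemma prob_sum : \sum_e prob e = 1.
Proof.
rewrite (bigID (fun e => e \in T)) /= big1 ?add0r => [|e He]; last by rewrite /prob He.
transitivity (\sum_(e | e \notin T) Res e / r e * tau^-1).
  by apply: eq_bigr => e /negbTE He; rewrite /prob He invfM mulrA.
by rewrite -mulr_suml divff // gt_eqF // tau_gt0.
Qed.

Lemma expectation_sub (F : E -> R) c :
  \sum_e prob e * F e - c = \sum_e prob e * (F e - c).
Proof.
rewrite -[c in LHS]mul1r -prob_sum mulr_suml -sumrB.
by apply: eq_bigr => e _; ring.
Qed.

Lemma expected_energy0 f : EE f 0 = energy r f.
Proof.
rewrite /expected_energy (big_pred1 [tuple]) => [|t]; last by apply/esym/eqP; exact: tuple0.
by rewrite big_nil mul1r.
Qed.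

Lemma expected_energyS f i : EE f i.+1 = \sum_e prob e * EE (step f e) i.
Proof.
rewrite /expected_energy.
rewrite (reindex (fun p : E * i.-tuple E => [tuple of p.1 :: p.2])) /=; last first.
  exists (fun t : i.+1.-tuple E => (thead t, [tuple of behead t])) => [[x t] _ | t _] /=.
    by rewrite theadE; congr pair; apply: val_inj.
  by rewrite [t in RHS]tuple_eta.
symmetry; under eq_bigr => e _ do rewrite mulr_sumr.
rewrite pair_bigA /=; apply: eq_bigr => -[e t] _ /=.
by rewrite big_cons mulrA.
Qed.

Lemma expected_step_energy f :
  \sum_e prob e * energy r (step f e) =
  energy r f - tau^-1 * \sum_(e | e \notin T) Dl e f ^+ 2 / r e.
Proof.
transitivity (\sum_e (prob e * energy r f
    - (if e \notin T then tau^-1 * (Dl e f ^+ 2 / r e) else 0))).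
  apply: eq_bigr => e _; rewrite /prob; case: ifPn => He /=; first by rewrite !mul0r subr0.
  rewrite energy_solver_step ?gt_eqF ?cycle_res_gt0 //.
  by field; rewrite ?gt_eqF ?cycle_res_gt0 ?tau_gt0.
by rewrite sumrB -mulr_suml prob_sum mul1r -big_mkcond mulr_sumr.
Qed.

Hypotheses (Hloop : forall e, src e != dst e) (Hac : acyclic src dst T).
Variables (chi : V -> R) (fstar : E -> R).
Hypothesis Hfs : feasible src dst chi fstar.
Hypothesis Hmin : forall f, feasible src dst chi f -> energy r fstar <= energy r f.

Lemma feasible_solver_step f e :
  feasible src dst chi f -> feasible src dst chi (step f e).
Proof.
move=> Hf c; rewrite (@divergence_lin R V E src dst 1 (- (Dl e f / Res e)) f
  (cycle_vec R src dst T e)) => [|e']; last by rewrite /solver_step; ring.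
by rewrite Hf (cycle_vec_circulation R Hloop Hcon) mulr0 addr0 mul1r.
Qed.

Lemma feasible_solver_iter (s : seq E) f :
  feasible src dst chi f -> feasible src dst chi (solver_iter src dst r T f s).
Proof. by elim: s f => [|e s IH] f Hf //=; apply/IH/feasible_solver_step. Qed.

(* Combining the expected decrease with the key inequality: in expectation,
   one step contracts the energy gap by the factor 1 - 1/tau. *)
Lemma expected_gap_step f : feasible src dst chi f ->
  \sum_e prob e * (energy r (step f e) - energy r fstar)
  <= (1 - tau^-1) * (energy r f - energy r fstar).
Proof.
move=> Hf; rewrite -expectation_sub expected_step_energy.
have Hgap := energy_gap_bound Hr Hcon Hloop Hac Hfs Hmin Hf.
have Htau : 0 <= tau^-1 by rewrite invr_ge0 ltW ?tau_gt0.
have := ler_wpM2l Htau Hgap; lra.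
Qed.

Lemma expected_gap_bound i f : feasible src dst chi f ->
  EE f i - energy r fstar <= (1 - tau^-1) ^+ i * (energy r f - energy r fstar).
Proof.
elim: i f => [|i IH] f Hf; first by rewrite expected_energy0 expr0 mul1r.
have q_ge0 : 0 <= 1 - tau^-1 by rewrite subr_ge0 invf_le1 ?tau_gt0 ?tau_ge1.
rewrite expected_energyS expectation_sub.
apply: le_trans (_ : \sum_e prob e * ((1 - tau^-1) ^+ i *
    (energy r (step f e) - energy r fstar)) <= _).
  by apply: ler_sum => e _; apply: ler_wpM2l; [exact: prob_ge0 | exact/IH/feasible_solver_step].
under eq_bigr do rewrite mulrCA; rewrite -mulr_sumr exprSr -mulrA.
by apply: ler_wpM2l; [exact: exprn_ge0 q_ge0 | exact: expected_gap_step].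
Qed.
End SimpleSolver.

Unset Implicit Arguments.

Theorem theorem4p1 (R : realFieldType) (V E : finType) (src dst : E -> V)
  (w : E -> R) (T : {set E}) (chi : V -> R) (f0 fstar : E -> R) :
  (forall e, src e != dst e) ->
  (forall e, 0 < w e) ->
  connected_in src dst [set: E] ->
  spanning_tree src dst T ->
  \sum_a chi a = 0 ->
  (exists e, e \notin T) ->
  (* f0: the feasible flow supported on T *)
  feasible src dst chi f0 -> (forall e, e \notin T -> f0 e = 0) ->
  (* fstar: the feasible flow of minimum energy, r_e = 1 / w_e *)
  feasible src dst chi fstar ->
  (forall f, feasible src dst chi f ->
     energy (fun e => (w e)^-1) fstar <= energy (fun e => (w e)^-1) f) ->
  let r := fun e => (w e)^-1 in
  (forall (i : nat) (t : i.-tuple E), all (fun e => e \notin T) t ->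
     feasible src dst chi (solver_iter src dst r T f0 t)) /\
  (forall i : nat,
     expected_energy src dst r T f0 i - energy r fstar
     <= (1 - (tau src dst r T)^-1) ^+ i * (energy r f0 - energy r fstar)).
Proof.
move=> Hloop Hw _ [Hcon Hac] _ Hoff Hf0 _ Hfs Hmin r.
have Hr e : 0 < r e by rewrite invr_gt0.
split=> [i t _ | i].
  exact: feasible_solver_iter.
exact: expected_gap_bound.
Qed.
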